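(* If $k \geq 9$ and $|q - q_k| < q_k^{-2k-6}$, then $d_{\mathrm{H}}(\pi_q(S_{k-1}), \pi_{q_k}(S_{k-1})) < q_k^{-2k-4}$.
   Context: $q_k$ is the unique root in $(1,2)$ of $x^k - x^{k-1} - \cdots - x - 1 = 0$. $\pi_q((\epsilon_j)_{j\ge1}) = \sum_{j\ge1}\epsilon_j q^{-j}$. $S_{k-1}$ is the set of $(\epsilon_j) \in \{0,1\}^\mathbb{N}$ containing no block of consecutive entries equal to $01^{k-1}$ or $10^{k-1}$. $d_{\mathrm{H}}(X,Y) = \max\{\sup_{x\in X}d(x,Y),\sup_{y\in Y}d(y,X)\}$ is the Hausdorff distance. *)

From Stdlib Require Import Reals.
From Coquelicot Require Import Coquelicot.
Open Scope R_scope.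

(* Digit sequences (eps_j)_{j>=1} in {0,1}^N are encoded as eps : nat -> bool,
   with eps n standing for eps_{n+1} (true = 1, false = 0). *)

Definition piq (q : R) (eps : nat -> bool) : R :=
  Series (fun n => (if eps n then 1 else 0) / q ^ (S n)).

Definition S_avoid (m : nat) (eps : nat -> bool) : Prop :=
  ~ (exists n : nat,
       (eps n = false /\ forall i, (1 <= i <= m)%nat -> eps (n + i)%nat = true) \/
       (eps n = true  /\ forall i, (1 <= i <= m)%nat -> eps (n + i)%nat = false)).

Definition piq_S (q : R) (m : nat) : R -> Prop :=
  fun x => exists eps, S_avoid m eps /\ x = piq q eps.

Definition dist_set (x : R) (Y : R -> Prop) : Rbar :=
  Glb_Rbar (fun r => exists y, Y y /\ r = Rabs (x - y)).

Definition sup_dist (X Y : R -> Prop) : Rbar :=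
  Rbar_lub (fun r => exists x, X x /\ r = dist_set x Y).

Definition Rbar_max (a b : Rbar) : Rbar :=
  if Rbar_le_dec a b then b else a.

Definition dH (X Y : R -> Prop) : Rbar :=
  Rbar_max (sup_dist X Y) (sup_dist Y X).

(* Every digit sequence is mapped Lipschitz-continuously in the base.  For
   bases q, q' >= a > 3/2 the n-th terms differ by at most
   (n+1) a^(-n-2) |q - q'|, and since n+1 <= 2 (3/2)^n this is dominated by a
   geometric series with ratio 3/(2a); summing gives
   |pi_q(eps) - pi_q'(eps)| <= L |q - q'| with L = 4 / (a (2a - 3)).  Hence the
   Hausdorff distance between pi_q(S) and pi_q'(S) is at most L |q - q'| for any
   set S of sequences.  For k >= 9 the root q_k is close enough to 2 that
   L < q_k^2, which turns |q - q_k| < q_k^(-2k-6) into the bound q_k^(-2k-4). *)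

From Stdlib Require Import Reals Lra Lia.
From Coquelicot Require Import Coquelicot.
Open Scope R_scope.

Lemma INR_S_le_pow_3_2 (n : nat) : INR (S n) <= 2 * (3 / 2) ^ n.
Proof.
  induction n as [|n IH]; [simpl; lra|].
  rewrite S_INR; simpl pow.
  assert (1 <= (3 / 2) ^ n) by (apply pow_R1_Rle; lra).
  lra.
Qed.

Lemma Rabs_pow_sub_pow_le (x y M : R) (n : nat) :
  0 <= x <= M -> 0 <= y <= M ->
  Rabs (x ^ S n - y ^ S n) <= INR (S n) * M ^ n * Rabs (x - y).
Proof.
  intros Hx Hy; induction n as [|n IH]; [simpl; rewrite !Rmult_1_r; lra|].
  replace (x ^ S (S n) - y ^ S (S n))
    with (x * (x ^ S n - y ^ S n) + y ^ S n * (x - y)) by (simpl; ring).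
  eapply Rle_trans; [apply Rabs_triang|].
  rewrite !Rabs_mult, (Rabs_right x), (Rabs_right (y ^ S n)) by
    (apply Rle_ge; try apply pow_le; lra).
  assert (Hyn : y ^ S n <= M ^ S n) by (apply pow_incr; lra).
  assert (Hstep : x * Rabs (x ^ S n - y ^ S n) <= M * (INR (S n) * M ^ n * Rabs (x - y)))
    by (apply Rmult_le_compat; auto using Rabs_pos; lra).
  assert (0 <= Rabs (x - y)) by apply Rabs_pos.
  rewrite (S_INR (S n)); simpl pow in *; nra.
Qed.

Lemma Rabs_inv_pow_sub_inv_pow_le (a p q : R) (n : nat) :
  0 < a -> a <= p -> a <= q ->
  Rabs (/ q ^ S n - / p ^ S n) <= INR (S n) * (/ a) ^ n * (Rabs (q - p) / (a * a)).
Proof.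
  intros Ha Hp Hq.
  rewrite <- !pow_inv.
  assert (Hinv : forall x, a <= x -> 0 <= / x <= / a).
  { intros x Hx; split; [apply Rlt_le, Rinv_0_lt_compat; lra|].
    apply Rinv_le_contravar; lra. }
  eapply Rle_trans; [apply Rabs_pow_sub_pow_le; apply Hinv; assumption|].
  apply Rmult_le_compat_l; [apply Rmult_le_pos; [apply pos_INR | apply pow_le; auto with real]|].
  replace (/ q - / p) with ((p - q) / (p * q)) by (field; lra).
  unfold Rdiv; rewrite Rabs_mult, Rabs_inv, (Rabs_right (p * q)) by nra.
  rewrite Rabs_minus_sym.
  apply Rmult_le_compat_l; [apply Rabs_pos|].
  apply Rinv_le_contravar; [nra | apply Rmult_le_compat; lra].
Qed.

Lemma Rabs_Series_minus_le (u v w : nat -> R) :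
  ex_series u -> ex_series v -> ex_series w ->
  (forall n, Rabs (u n - v n) <= w n) ->
  Rabs (Series u - Series v) <= Series w.
Proof.
  intros Hu Hv Hw Huvw.
  assert (Habs : ex_series (fun n => Rabs (u n - v n))).
  { apply (@ex_series_le R_AbsRing R_CompleteNormedModule _ w); auto.
    intros n; change norm with Rabs; simpl; rewrite Rabs_Rabsolu; auto. }
  rewrite <- Series_minus by auto.
  eapply Rle_trans; [apply Series_Rabs; auto|].
  apply Series_le; auto.
  intros n; split; [apply Rabs_pos | auto].
Qed.

Definition digit_term (q : R) (eps : nat -> bool) (n : nat) : R :=
  (if eps n then 1 else 0) / q ^ S n.

Lemma ex_series_digit_term (q : R) (eps : nat -> bool) :
  1 < q -> ex_series (digit_term q eps).
Proof.
  intros Hq.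
  apply (@ex_series_le R_AbsRing R_CompleteNormedModule _ (fun n => (/ q) ^ n)).
  - intros n; change norm with Rabs; simpl; unfold digit_term.
    assert (Hqn : 0 < q ^ n) by (apply pow_lt; lra).
    rewrite pow_inv.
    destruct (eps n).
    + unfold Rdiv; rewrite Rmult_1_l, Rabs_right.
      * apply Rinv_le_contravar; simpl; nra.
      * apply Rle_ge, Rlt_le, Rinv_0_lt_compat, pow_lt; lra.
    + rewrite Rdiv_0_l, Rabs_R0; apply Rlt_le, Rinv_0_lt_compat; lra.
  - apply ex_series_geom.
    rewrite Rabs_right by (apply Rle_ge, Rlt_le, Rinv_0_lt_compat; lra).
    rewrite <- Rinv_1; apply Rinv_lt_contravar; lra.
Qed.

Lemma Rabs_digit_term_sub_le (a p q : R) (eps : nat -> bool) (n : nat) :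
  3 / 2 < a -> a <= p -> a <= q ->
  Rabs (digit_term q eps n - digit_term p eps n)
    <= 2 * Rabs (q - p) / (a * a) * (3 / (2 * a)) ^ n.
Proof.
  intros Ha Hp Hq; unfold digit_term.
  assert (Hr : (3 / (2 * a)) ^ n = (3 / 2) ^ n * (/ a) ^ n).
  { rewrite <- Rpow_mult_distr; f_equal; field; lra. }
  assert (Hia : 0 < (/ a) ^ n) by (apply pow_lt, Rinv_0_lt_compat; lra).
  assert (0 <= Rabs (q - p) / (a * a))
    by (apply Rmult_le_pos; [apply Rabs_pos | apply Rlt_le, Rinv_0_lt_compat; nra]).
  assert (Hterm := Rabs_inv_pow_sub_inv_pow_le a p q n ltac:(lra) Hp Hq).
  assert (Hn := INR_S_le_pow_3_2 n).
  apply Rle_trans with (Rabs (/ q ^ S n - / p ^ S n)).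
  - destruct (eps n); unfold Rdiv.
    + rewrite !Rmult_1_l; lra.
    + rewrite !Rmult_0_l, Rminus_0_r, Rabs_R0; apply Rabs_pos.
  - eapply Rle_trans; [exact Hterm|].
    replace (2 * Rabs (q - p) / (a * a) * (3 / (2 * a)) ^ n)
      with (2 * (3 / 2) ^ n * (/ a) ^ n * (Rabs (q - p) / (a * a))) by (rewrite Hr; field; lra).
    apply Rmult_le_compat_r; [assumption|].
    apply Rmult_le_compat_r; lra.
Qed.

Lemma piq_lipschitz (a p q : R) (eps : nat -> bool) :
  3 / 2 < a -> a <= p -> a <= q ->
  Rabs (piq q eps - piq p eps) <= 4 / (a * (2 * a - 3)) * Rabs (q - p).
Proof.
  intros Ha Hp Hq.
  set (r := 3 / (2 * a)).
  assert (Hr : Rabs r < 1).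
  { unfold r; rewrite Rabs_right.
    - apply (Rmult_lt_reg_r (2 * a)); [lra|]; field_simplify; lra.
    - apply Rle_ge, Rmult_le_pos; [lra | apply Rlt_le, Rinv_0_lt_compat; lra]. }
  set (C := 2 * Rabs (q - p) / (a * a)).
  assert (HC : ex_series (fun n => C * r ^ n))
    by (apply (ex_series_scal_l C (fun n => r ^ n)), ex_series_geom; auto).
  assert (Hsum : Series (fun n => C * r ^ n) = 4 / (a * (2 * a - 3)) * Rabs (q - p)).
  { rewrite Series_scal_l, Series_geom by auto; unfold C, r; field; lra. }
  rewrite <- Hsum.
  apply Rabs_Series_minus_le; [apply ex_series_digit_term; lra ..| |].
  - exact HC.
  - intros n; apply Rabs_digit_term_sub_le; assumption.
Qed.

Lemma sup_dist_le (X Y : R -> Prop) (c : R) :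
  (forall x, X x -> exists y, Y y /\ Rabs (x - y) <= c) ->
  Rbar_le (sup_dist X Y) c.
Proof.
  intros Hclose; unfold sup_dist, Rbar_lub.
  destruct (Rbar_ex_lub _) as [l Hlub]; simpl.
  apply (proj2 Hlub); intros r [x [Hx ->]].
  destruct (Hclose x Hx) as [y [Hy Hxy]].
  unfold dist_set.
  destruct (Glb_Rbar_correct (fun r => exists y, Y y /\ r = Rabs (x - y))) as [Hlb _].
  eapply Rbar_le_trans; [apply Hlb; exists y; split; eauto | exact Hxy].
Qed.

Lemma dH_le (X Y : R -> Prop) (c : R) :
  (forall x, X x -> exists y, Y y /\ Rabs (x - y) <= c) ->
  (forall y, Y y -> exists x, X x /\ Rabs (y - x) <= c) ->
  Rbar_le (dH X Y) c.
Proof.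
  intros HXY HYX; unfold dH, Rbar_max.
  destruct (Rbar_le_dec _ _); apply sup_dist_le; assumption.
Qed.

Lemma dH_piq_S_le (p q c : R) (m : nat) :
  (forall eps, Rabs (piq p eps - piq q eps) <= c) ->
  Rbar_le (dH (piq_S p m) (piq_S q m)) c.
Proof.
  intros Hc; apply dH_le.
  - intros x [eps [Heps ->]]; exists (piq q eps); split; [exists eps; auto | apply Hc].
  - intros y [eps [Heps ->]]; exists (piq p eps); split; [exists eps; auto|].
    rewrite Rabs_minus_sym; apply Hc.
Qed.

Lemma multinacci_root_bounds (k : nat) (qk : R) :
  (9 <= k)%nat -> 1 < qk < 2 ->
  qk ^ k = sum_f_R0 (fun i => qk ^ i) (k - 1) ->
  300 <= qk ^ k /\ 199 / 100 <= qk.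
Proof.
  intros Hk Hqk Heq.
  assert (Hroot : qk ^ k * (2 - qk) = 1).
  { pose proof (GP_finite qk (k - 1)) as G.
    replace (k - 1 + 1)%nat with k in G by lia.
    rewrite <- Heq in G; lra. }
  assert (H9 : 9 <= INR k) by (replace 9 with (INR 9) by (simpl; lra); apply le_INR; lia).
  assert (Hbern := Rle_pow_lin (qk - 1) k ltac:(lra)).
  replace (1 + (qk - 1)) with qk in Hbern by ring.
  assert (Hbern9 : 1 + 9 * (qk - 1) <= qk ^ k) by nra.
  assert (Hlow : 17 / 9 <= qk) by nra.
  assert (H300 : 300 <= qk ^ k).
  { apply Rle_trans with (qk ^ 9); [|apply Rle_pow; [lra | lia]].
    apply Rle_trans with ((17 / 9) ^ 9); [simpl; lra | apply pow_incr; lra]. }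
  split; [assumption | nra].
Qed.

Lemma mult_lt_inv_pow (x L d : R) (n : nat) :
  0 < x -> L < x * x -> 0 <= d -> d < / x ^ (n + 2) -> L * d < / x ^ n.
Proof.
  intros Hx HL Hd Hdx.
  assert (Hxn : 0 < x ^ n) by (apply pow_lt; lra).
  rewrite pow_add in Hdx; simpl in Hdx.
  replace (/ (x ^ n * (x * (x * 1)))) with (/ x ^ n / (x * x)) in Hdx by (field; lra).
  apply Rle_lt_trans with (x * x * d); [apply Rmult_le_compat_r; lra|].
  apply (Rmult_lt_compat_l (x * x)) in Hdx; [|nra].
  replace (x * x * (/ x ^ n / (x * x))) with (/ x ^ n) in Hdx by (field; lra).
  exact Hdx.
Qed.

Theorem lemma4p7 (k : nat) (qk q : R) :
  (9 <= k)%nat ->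
  1 < qk < 2 ->
  qk ^ k = sum_f_R0 (fun i => qk ^ i) (k - 1) ->
  Rabs (q - qk) < / qk ^ (2 * k + 6) ->
  Rbar_lt (dH (piq_S q (k - 1)) (piq_S qk (k - 1))) (Finite (/ qk ^ (2 * k + 4))).
Proof.
  intros Hk Hqk Heq Hclose.
  destruct (multinacci_root_bounds k qk Hk Hqk Heq) as [Hpow Hqk_low].
  assert (Hnear : Rabs (q - qk) < / 300).
  { eapply Rlt_le_trans; [exact Hclose|].
    apply Rinv_le_contravar; [lra|].
    apply Rle_trans with (qk ^ k); [assumption | apply Rle_pow; [lra | lia]]. }
  assert (Hq : 198 / 100 <= q) by (apply Rabs_def2 in Hnear; lra).
  apply Rbar_le_lt_trans with (4 / (198 / 100 * (2 * (198 / 100) - 3)) * Rabs (q - qk)).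
  - apply dH_piq_S_le; intros eps.
    apply piq_lipschitz; lra.
  - apply mult_lt_inv_pow; [lra | nra | apply Rabs_pos |].
    replace (2 * k + 4 + 2)%nat with (2 * k + 6)%nat by lia.
    exact Hclose.
Qed.
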